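(* The metric space $(C^{lf}_\infty(\mathbb C),d_{\mathcal V})$ is path-connected.
   Context: $C^{lf}_\infty(\mathbb C)$ is the set of countably infinite locally finite subsets of $\mathbb C$ (i.e. meeting each compact set in finitely many points). $d_{\mathcal V}(A,B)=\sum_j 2^{-j}\frac{|\sum_{a\in A}\varphi_j(a)-\sum_{b\in B}\varphi_j(b)|}{1+|\sum_{a\in A}\varphi_j(a)-\sum_{b\in B}\varphi_j(b)|}$ for a fixed sequence $(\varphi_j)$ of compactly supported continuous real functions on $\mathbb C$ such that for each $m$ those supported in $\{|z|\le m\}$ are sup-norm dense among such functions supported in $\{|z|\le m\}$. *)

(* The complex plane C is modelled as R * R
   (product topology = Euclidean topology), R : realType. *)
From HB Require Import structures.
From mathcomp Require Import all_boot all_order all_algebra.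
From mathcomp Require Import all_classical all_reals all_analysis.
Set Implicit Arguments. Unset Strict Implicit. Unset Printing Implicit Defensive.
Import Order.TTheory GRing.Theory Num.Theory.
Import numFieldNormedType.Exports.
Local Open Scope classical_set_scope.
Local Open Scope ring_scope.

Definition cmod {R : realType} (z : R * R) : R := Num.sqrt (z.1 ^+ 2 + z.2 ^+ 2).

Definition locally_finite {R : realType} (A : set (R * R)) : Prop :=
  forall K : set (R * R), compact K -> finite_set (A `&` K).

Definition Clf_inf {R : realType} (A : set (R * R)) : Prop :=
  [/\ countable A, infinite_set A & locally_finite A].

Definition supported_in {R : realType} (m : R) (f : R * R -> R) : Prop :=
  forall z, m < cmod z -> f z = 0.

Definition admissible_seq {R : realType} (phi : nat -> R * R -> R) : Prop :=
  (forall j, continuous (phi j) /\ exists m : R, supported_in m (phi j)) /\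
  (forall m : nat, (0 < m)%N ->
     forall g : R * R -> R, continuous g -> supported_in m%:R g ->
     forall eps : R, 0 < eps ->
       exists j, supported_in m%:R (phi j) /\ forall z, `|g z - phi j z| < eps).

Definition set_sum {R : realType} (A : set (R * R)) (f : R * R -> R) : R :=
  \sum_(a \in A) f a.

(* the metric d_V; the paper's index j = 1,2,... corresponds to phi (j-1) *)
Definition dV {R : realType} (phi : nat -> R * R -> R) (A B : set (R * R)) : R :=
  limn (series (fun j : nat =>
     let D := set_sum A (phi j) - set_sum B (phi j) in
     (2 ^- j.+1) * (`|D| / (1 + `|D|)))).

Definition dV_path_connected {R : realType} (phi : nat -> R * R -> R) : Prop :=
  forall A B : set (R * R), Clf_inf A -> Clf_inf B ->
  exists gamma : R -> set (R * R),
    [/\ (forall t, 0 <= t <= 1 -> Clf_inf (gamma t)),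
        gamma 0 = A, gamma 1 = B &
        (forall t, 0 <= t <= 1 -> forall e : R, 0 < e ->
           exists2 delta : R, 0 < delta &
             forall s, 0 <= s <= 1 -> `|s - t| < delta ->
               dV phi (gamma s) (gamma t) < e)].

From HB Require Import structures.
From mathcomp Require Import all_boot all_order all_algebra.
From mathcomp Require Import all_classical all_reals all_analysis.
From mathcomp Require Import finmap ring lra.
Set Implicit Arguments. Unset Strict Implicit. Unset Printing Implicit Defensive.
Import Order.TTheory GRing.Theory Num.Theory.
Import numFieldNormedType.Exports.
Local Open Scope classical_set_scope.
Local Open Scope ring_scope.

(* The dilations z |-> c + (z - c) / u about a centre c push every point other
   than c to infinity as u -> 0+.  Hence, for a compactly supported test function,
   near any value of u only finitely many points of a locally finite set
   contribute, and near u = 0 none do: the sums of phi_j over the dilated set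
   depend continuously on u, and therefore so does d_V.  The path dilates A with
   u = 1 - 2t until it has left for infinity, then brings B back with u = 2t - 1;
   meanwhile the points c + n (1, y), n >= 1, dilated with u = 1 - |2t - 1|, keep
   every set on the path infinite.  Choosing c and the slope of the ray outside
   countably many bad values keeps the dilated copies of A, Z and B disjoint, so
   the sum over the path is the sum over the three pieces. *)

Lemma near_eq_continuous (T U : topologicalType) (f g : T -> U) (t : T) :
  (\forall s \near t, f s = g s) -> {for t, continuous g} -> {for t, continuous f}.
Proof.
move=> fg cg; rewrite /prop_for /continuous_at (nbhs_singleton fg).
apply: cvg_trans cg; apply: near_eq_cvg; exact: filterS fg.
Qed.

Lemma continuous_fsbig (T : topologicalType) (R : realType) (I : choiceType)
    (L : set I) (G : I -> T -> R) :
  (forall i, L i -> continuous (G i)) ->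
  (forall t : T, exists2 F : set I, finite_set F &
     \forall s \near t, forall i, L i -> ~ F i -> G i s = 0) ->
  continuous (fun s => \sum_(i \in L) G i s).
Proof.
move=> cG lfG t; have [F finF nearF] := lfG t.
set FL := F `&` L; have finFL : finite_set FL by exact: finite_setIl.
apply: (@near_eq_continuous _ _ _
  (fun s => \sum_(i <- fset_set FL | i \in fset_set FL) G i s)).
  near=> s; rewrite -big_seq -fsbig_finite // (fsbig_widen FL L) //; first by move=> ? [].
  move=> i [Li FLi]; apply: (near nearF s) => // Fi; exact: FLi.
apply: continuous_big => [|i]; first exact: add_continuous.
by rewrite in_fset_set // => /set_mem [_ /cG].
Unshelve. all: by end_near.
Qed.

Lemma countable_setU T (A B : set T) : countable A -> countable B -> countable (A `|` B).
Proof.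
move=> cA cB; rewrite (_ : A `|` B = \bigcup_(b in [set: bool]) if b then A else B).
  by apply: bigcup_countable => [|[]]; first exact: countableP.
apply/seteqP; split => [x [Ax | Bx] | x [[] _ ?]];
  by [exists true | exists false | left | right].
Qed.

Lemma exists_not_in_countable (R : realType) (S : set R) : countable S -> exists x, ~ S x.
Proof.
move=> cS; apply: contrapT => allS.
have ST : S = setT.
  by apply/seteqP; split => // x _; apply: contrapT => Sx; apply: allS; exists x.
by have := countable_lebesgue_measure0 cS; rewrite ST -set_itvNyy lebesgue_measure_itv.
Qed.

Section dilation.
Variable R : realType.
Implicit Types (c x z : R * R) (u r : R).

Definition box c r : set (R * R) :=
  [set x | `|x.1 - c.1| <= r /\ `|x.2 - c.2| <= r].

Lemma box_compact c r : compact (box c r).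
Proof.
have -> : box c r = `[c.1 - r, c.1 + r] `*` `[c.2 - r, c.2 + r].
  by apply/seteqP; split => x /=; rewrite !in_itv /= -!ler_distl.
by apply: compact_setX; apply: segment_compact.
Qed.

Lemma compact_sub_box (K : set (R * R)) : compact K -> exists r, K `<=` box 0 r.
Proof.
move=> /compact_bounded [r [_ Kr]]; exists (r + 1) => z Kz.
have /Kr/(_ z Kz) : r < r + 1 by rewrite ltrDl.
by rewrite /= prod_normE ge_max => /andP; rewrite /box /= !subr0.
Qed.

Lemma supported_in_box m (f : R * R -> R) z :
  supported_in m f -> f z != 0 -> box 0 `|m| z.
Proof.
move=> fm fz; have zm : cmod z <= `|m|.
  apply: le_trans (ler_norm m); rewrite leNgt; apply/negP => /fm zf.
  by rewrite zf eqxx in fz.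
rewrite /box /= !subr0; split; apply: le_trans zm;
  by rewrite /cmod -sqrtr_sqr ler_sqrt ?lerDl ?lerDr ?sqr_ge0 ?addr_ge0 ?sqr_ge0.
Qed.

Definition dilate c u x : R * R := (c.1 + (x.1 - c.1) / u, c.2 + (x.2 - c.2) / u).

Lemma dilate1 c x : dilate c 1 x = x.
Proof. by case: x => x1 x2; rewrite /dilate /= !divr1 ![c.1 + _]addrC ![c.2 + _]addrC !subrK. Qed.

Lemma dilate_inj c u : u != 0 -> injective (dilate c u).
Proof.
move=> u0 [x1 x2] [y1 y2]; rewrite /dilate /= => -[e1 e2].
have uV : u^-1 != 0 by rewrite invr_eq0.
by move/addrI/(mulIf uV)/addIr: e1 => ->; move/addrI/(mulIf uV)/addIr: e2 => ->.
Qed.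

Lemma continuous_dilate c x u : u != 0 -> {for u, continuous (dilate c ^~ x)}.
Proof.
move=> u0; rewrite /prop_for /continuous_at /dilate /=.
apply: (@cvg_pair _ _ _ _ (nbhs (c.1 + (x.1 - c.1) / u)) (nbhs (c.2 + (x.2 - c.2) / u)));
  (apply: cvgD; first exact: cvg_cst);
  (apply: cvgM; first exact: cvg_cst); exact: cvgV.
Qed.

Lemma dilate_box c x u P r : 0 < u -> u <= P -> box 0 r (dilate c u x) ->
  box c (P * (r + `|c.1| + `|c.2|)) x.
Proof.
move=> u0 uP; rewrite /box /dilate /= !subr0 => -[r1 r2].
have normE (a : R) : `|a| = u * `|a / u|.
  by rewrite normrM normfV (gtr0_norm u0) mulrCA divff ?gt_eqF ?mulr1.
have ler_normDB (a b : R) : `|a| <= `|b + a| + `|b|.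
  by rewrite -[X in `|X|](addKr b) addrC (le_trans (ler_normB _ _)) // distrC.
have := ler_normDB ((x.1 - c.1) / u) c.1; have := ler_normDB ((x.2 - c.2) / u) c.2.
have := normr_ge0 c.1; have := normr_ge0 c.2; have := normr_ge0 (c.1 + (x.1 - c.1) / u).
rewrite (normE (x.1 - c.1)) (normE (x.2 - c.2)) => *.
have rc0 : 0 <= r + `|c.1| + `|c.2| by lra.
by split; (apply: le_trans (ler_wpM2r rc0 uP); apply: ler_wpM2l; [exact: ltW | lra]).
Qed.

Lemma dilate_escapes m (f : R * R -> R) c x : supported_in m f -> x != c ->
  \forall u \near 0, 0 < u -> f (dilate c u x) = 0.
Proof.
move=> fm xc; have dx0 : 0 < `|x.1 - c.1| + `|x.2 - c.2|.
  rewrite lt_def addr_ge0 // andbT; apply: contra xc.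
  rewrite paddr_eq0 // !normr_eq0 !subr_eq0 => /andP[/eqP e1 /eqP e2].
  by apply/eqP; move: e1 e2; case: x {fm} c => ? ? [? ?] /= -> ->.
have K0 : 0 <= `|m| + `|c.1| + `|c.2| by rewrite !addr_ge0.
set K := `|m| + `|c.1| + `|c.2| in K0 *.
near=> u => u0; case: (eqVneq (f (dilate c u x)) 0) => //.
move=> /(supported_in_box fm)/(dilate_box u0 (lexx u)) [b1 b2].
have u_small : u * (2 * K + 1) < `|x.1 - c.1| + `|x.2 - c.2|.
  rewrite -ltr_pdivlMr ?ltr_wpDl ?mulr_ge0 //; near: u.
  by apply: lt_nbhsl; rewrite divr_gt0 // ltr_wpDl ?mulr_ge0.
have : u * (2 * K + 1) = 2 * (u * K) + u by ring.
by rewrite -/K in b1 b2; lra.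
Unshelve. all: by end_near.
Qed.

Lemma box0_sub_box c r : box 0 r `<=` box c (r + `|c.1| + `|c.2|).
Proof.
by move=> x; rewrite -{1}(dilate1 c x) => /(dilate_box ltr01 (lexx 1)); rewrite mul1r.
Qed.

Lemma locally_finite_box c (A : set (R * R)) :
  (forall r, finite_set (A `&` box c r)) -> locally_finite A.
Proof.
move=> Abox K /compact_sub_box [r Kr]; apply: sub_finite_set (Abox (r + `|c.1| + `|c.2|)).
by move=> x [Ax /Kr /box0_sub_box].
Qed.

Definition dilate_eval (f : R * R -> R) c x u : R :=
  if 0 < u then f (dilate c u x) else 0.

Lemma continuous_dilate_eval m (f : R * R -> R) c x :
  continuous f -> supported_in m f -> x != c -> continuous (dilate_eval f c x).
Proof.
move=> cf fm xc u; rewrite /dilate_eval; case: (ltrgtP u 0) => [u_lt0 | u_gt0 | ->].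
- apply: (@near_eq_continuous _ _ _ (cst 0)); last exact: cvg_cst.
  near=> v; have v_lt0 : v < 0 by near: v; exact: lt_nbhsl.
  by rewrite ltNge (ltW v_lt0).
- apply: (@near_eq_continuous _ _ _ (f \o dilate c ^~ x)); last first.
    by apply: continuous_comp; [exact: continuous_dilate (lt0r_neq0 u_gt0) | exact: cf].
  near=> v; have v_gt0 : 0 < v by near: v; exact: lt_nbhsr.
  by rewrite v_gt0.
- apply: (@near_eq_continuous _ _ _ (cst 0)); last exact: cvg_cst.
  near=> v; case: ifPn => // v_gt0; exact: (near (dilate_escapes fm xc) v).
Unshelve. all: by end_near.
Qed.

End dilation.

Definition profile (R : realType) (k : nat) (t : R) : R :=
  if k == 0%N then 1 - 2 * t else if k == 1%N then 1 - `|2 * t - 1| else 2 * t - 1.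

Lemma continuous_profile (R : realType) k : continuous (@profile R k).
Proof.
move=> t; have double : 2 * s @[s --> t] --> 2 * t.
  by apply: cvgM; [exact: cvg_cst | exact: cvg_id].
rewrite /profile; case: k => [|[|k]] /=.
- by apply: cvgB => //; exact: cvg_cst.
- by apply: cvgB; [exact: cvg_cst | apply: cvg_norm; apply: cvgB => //; exact: cvg_cst].
- by apply: cvgB => //; exact: cvg_cst.
Qed.

Lemma profile_le (R : realType) k (t : R) : profile k t <= 1 + 2 * `|t|.
Proof.
have := ler_norm t; have := ler_norm (- t); rewrite normrN.
by have := normr_ge0 (2 * t - 1); rewrite /profile; case: k => [|[|k]] /=; lra.
Qed.

Section dilation_path.
Variable R : realType.
Implicit Types (A Z B : set (R * R)) (c x : R * R) (t : R).

Definition piece A Z B (k : nat) : set (R * R) :=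
  if k == 0%N then A else if k == 1%N then Z else B.

Definition labelled A Z B : set ((R * R) * nat) :=
  [set l | (l.2 <= 2)%N /\ piece A Z B l.2 l.1].

Definition present A Z B t : set ((R * R) * nat) :=
  [set l | labelled A Z B l /\ 0 < profile l.2 t].

Definition dilation_path c A Z B t : set (R * R) :=
  (fun l => dilate c (profile l.2 t) l.1) @` present A Z B t.

(* No point of A lies on an open half-line from c through a point of Z. *)
Definition rays_disjoint c A Z :=
  forall a z p q, A a -> Z z -> 0 < p -> 0 < q -> dilate c p a != dilate c q z.

Lemma dilation_path0 c A Z B : dilation_path c A Z B 0 = A.
Proof.
apply/seteqP; split => [_ [[x k] [[/= k2 Xx] pk] <-] | a Aa] /=.
  move: k2 Xx pk; rewrite /profile /piece mulr0.
  case: k => [|[|[|k]]] //= _ Ax; first by rewrite subr0 dilate1.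
    by rewrite sub0r normrN normr1 subrr ltxx.
  by rewrite sub0r ltr0N1.
by exists (a, 0%N); rewrite /present /labelled /profile /= mulr0 subr0 ?dilate1 ?ltr01.
Qed.

Lemma dilation_path1 c A Z B : dilation_path c A Z B 1 = B.
Proof.
have e2 : (2 : R) * 1 - 1 = 1 by rewrite mulr1 addrK.
apply/seteqP; split => [_ [[x k] [[/= k2 Xx] pk] <-] | b Bb] /=.
  move: k2 Xx pk; rewrite /profile /piece.
  case: k => [|[|[|k]]] //= _ Bx pk; last by rewrite e2 dilate1.
    by move: pk; rewrite mulr1; lra.
  by move: pk; rewrite e2 normr1 subrr ltxx.
by exists (b, 2%N); rewrite /present /labelled /profile /= e2 ?dilate1 ?ltr01.
Qed.

Lemma piece_ind (P : set (R * R) -> Prop) A Z B k :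
  P A -> P Z -> P B -> P (piece A Z B k).
Proof. by case: k => [|[|k]]. Qed.

Lemma labelled_countable A Z B :
  countable A -> countable Z -> countable B -> countable (labelled A Z B).
Proof.
move=> cA cZ cB; apply: (@sub_countable _ _ _ (\bigcup_(k in [set: nat])
    ((fun x => (x, k)) @` piece A Z B k))).
  by apply: subset_card_le => -[x k] [_ Xx]; exists k => //; exists x.
apply: bigcup_countable => [|k _]; first exact: countableP.
by apply: sub_countable (card_image_le _ _) _; apply: (@piece_ind (fun X => countable X)).
Qed.

Lemma labelled_box_finite c A Z B r :
  locally_finite A -> locally_finite Z -> locally_finite B ->
  finite_set [set l | labelled A Z B l /\ box c r l.1].
Proof.
move=> lfA lfZ lfB; apply: (@sub_finite_set _ _ (\bigcup_(k in `I_3)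
    ((fun x => (x, k)) @` (piece A Z B k `&` box c r)))).
  by move=> [x k] [[/= k2 Xx] bx]; exists k => //; exists x.
apply: bigcup_finite => [|k _]; first exact: finite_II.
apply: finite_image; apply: (@piece_ind (fun X => finite_set (X `&` box c r)));
  [apply: lfA | apply: lfZ | apply: lfB]; exact: box_compact.
Qed.

Lemma Clf_inf_dilation_path c A Z B t :
  Clf_inf A -> Clf_inf Z -> Clf_inf B -> 0 <= t <= 1 -> Clf_inf (dilation_path c A Z B t).
Proof.
move=> [cA iA lfA] [cZ iZ lfZ] [cB iB lfB] /andP[t0 t1]; split.
- apply: sub_countable (card_image_le _ _) _.
  apply: (@sub_countable _ _ _ (labelled A Z B)); first by apply: subset_card_le => l [].
  exact: labelled_countable.
- have [k k2 pk] : exists2 k, (k <= 2)%N & 0 < profile k t.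
    case: (ltrgtP t (1 / 2)) => ht; [exists 0%N | exists 2%N | exists 1%N];
      rewrite // /profile /=; try lra.
    by rewrite ht mulrC divfK // subrr normr0 subr0.
  apply: (@sub_infinite_set _ (dilate c (profile k t) @` piece A Z B k)).
    by move=> _ [x Xx <-]; exists (x, k).
  rewrite (eq_finite_set (inj_card_eq _)); first exact: (@piece_ind (fun X => infinite_set X)).
  by move=> ? ? _ _; apply: dilate_inj; exact: lt0r_neq0 pk.
- move=> K /compact_sub_box [r Kr].
  apply: (@sub_finite_set _ _ ((fun l => dilate c (profile l.2 t) l.1) @`
    [set l | labelled A Z B l /\ box c (3 * (r + `|c.1| + `|c.2|)) l.1])).
    move=> _ [[l [Ll pl] <-] Kz]; exists l => //; split => //.
    apply: (dilate_box pl _ (Kr _ Kz)); have := profile_le l.2 t; rewrite ger0_norm //; lra.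
  exact/finite_image/labelled_box_finite.
Qed.

Section separated_pieces.
Variables (c : R * R) (A Z B : set (R * R)).
Hypotheses (AZ : rays_disjoint c A Z) (BZ : rays_disjoint c B Z).
Hypotheses (lfA : locally_finite A) (lfZ : locally_finite Z) (lfB : locally_finite B).
Hypotheses (Ac : ~ A c) (Zc : ~ Z c) (Bc : ~ B c).

Lemma present_inj t : set_inj (present A Z B t) (fun l => dilate c (profile l.2 t) l.1).
Proof.
move=> [x k] [x' k']; rewrite !in_setE => -[[/= k2 Xx] pk] [[/= k2' Xx'] pk'] /= E.
have [ekk' | kk'] := eqVneq k k'.
  by rewrite -ekk' in E *; rewrite (dilate_inj (lt0r_neq0 pk) E).
exfalso; move: k2 k2' Xx Xx' pk pk' E kk'; rewrite /piece /profile.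
case: k => [|[|[|k]]] //; case: k' => [|[|[|k']]] //= _ _ Xx Xx' pk pk' E _; try lra.
- by move: (AZ Xx Xx' pk pk'); rewrite E eqxx.
- by move: (AZ Xx' Xx pk' pk); rewrite E eqxx.
- by move: (BZ Xx' Xx pk' pk); rewrite E eqxx.
- by move: (BZ Xx Xx' pk pk'); rewrite E eqxx.
Qed.

Lemma set_sum_dilation_path (f : R * R -> R) t :
  set_sum (dilation_path c A Z B t) f =
  \sum_(l \in labelled A Z B) dilate_eval f c l.1 (profile l.2 t).
Proof.
rewrite /set_sum /dilation_path fsbig_image; last exact: present_inj.
rewrite (eq_fsbigr (fun l => dilate_eval f c l.1 (profile l.2 t))); last first.
  by move=> l; rewrite in_setE => -[_ pl]; rewrite /dilate_eval pl.
apply: fsbig_widen => [l [] // | l [Ll not_present]].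
by rewrite /dilate_eval /=; case: ifP => // pl; exfalso; apply: not_present.
Qed.

Lemma labelled_neq_centre l : labelled A Z B l -> l.1 != c.
Proof.
by move=> [_ Xl]; apply/eqP => lc; move: Xl; rewrite lc; apply: (@piece_ind (fun X => ~ X c)).
Qed.

Lemma continuous_set_sum_dilation_path m (f : R * R -> R) :
  continuous f -> supported_in m f -> continuous (fun t => set_sum (dilation_path c A Z B t) f).
Proof.
move=> cf fm; under eq_fun do rewrite set_sum_dilation_path.
apply: continuous_fsbig => [l Ll t | t0].
  apply: continuous_comp; first exact: continuous_profile.
  exact: continuous_dilate_eval cf fm (labelled_neq_centre Ll) _.
pose P := 3 + 2 * `|t0|.
exists [set l | labelled A Z B l /\ box c (P * (`|m| + `|c.1| + `|c.2|)) l.1].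
  exact: labelled_box_finite.
near=> t => l Ll not_near; rewrite /dilate_eval; case: ifPn => // pl.
case: (eqVneq (f (dilate c (profile l.2 t) l.1)) 0) => // /(supported_in_box fm) fl.
exfalso; apply: not_near; split => //; apply: (dilate_box pl _ fl).
have t_lt : t < `|t0| + 1 by near: t; apply: lt_nbhsl; have := ler_norm t0; lra.
have Nt_lt : - t < `|t0| + 1.
  by near: t; apply: Nlt_nbhsl; have := ler_norm (- t0); rewrite normrN; lra.
have : `|t| < `|t0| + 1 by rewrite ltr_norml; apply/andP; split; lra.
by have := profile_le l.2 t; rewrite /P; lra.
Unshelve. all: by end_near.
Qed.

End separated_pieces.
End dilation_path.

Section ray.
Variable R : realType.
Implicit Types (c : R * R) (y : R).

Definition ray c y : set (R * R) :=
  [set (c.1 + n.+1%:R, c.2 + n.+1%:R * y) | n in [set: nat]].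

Lemma Clf_inf_ray c y : Clf_inf (ray c y).
Proof.
split.
- by apply: sub_countable (card_image_le _ _) _; exact: countableP.
- rewrite (eq_finite_set (inj_card_eq _)); first exact: infinite_nat.
  by move=> m n _ _ [] /addrI /eqP; rewrite eqr_nat eqSS => /eqP.
apply: (@locally_finite_box _ c) => r.
apply: (@sub_finite_set _ _ [set (c.1 + n.+1%:R, c.2 + n.+1%:R * y) | n in `I_(Num.Def.trunc r)]).
  move=> _ [[n _ <-] [/= nr _]]; exists n => //; move: nr; rewrite addrC addKr normr_nat => nr.
  by rewrite /= -ltnS -(ltr_nat R); apply: le_lt_trans nr (truncnS_gt r).
exact/finite_image/finite_II.
Qed.

Lemma ray_centre c y : ~ ray c y c.
Proof.
case=> n _ /(congr1 fst) /= /eqP.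
by rewrite -[X in _ == X]addr0 (inj_eq (addrI _)) pnatr_eq0.
Qed.

Lemma rays_disjoint_ray c y A :
  (forall a, A a -> c.1 < a.1 -> a.2 - c.2 != y * (a.1 - c.1)) -> rays_disjoint c A (ray c y).
Proof.
move=> slope a _ p q Aa [n _ <-] p0 q0; apply/eqP; rewrite /dilate /=.
rewrite [c.1 + _ - _]addrC addKr [c.2 + _ - _]addrC addKr => -[/addrI e1 /addrI e2].
have a1E : a.1 - c.1 = n.+1%:R / q * p by rewrite -e1 divfK ?gt_eqF.
have a2E : a.2 - c.2 = n.+1%:R * y / q * p by rewrite -e2 divfK ?gt_eqF.
have a_right : c.1 < a.1 by rewrite -subr_gt0 a1E !mulr_gt0 ?invr_gt0.
by move: (slope a Aa a_right); rewrite a1E a2E => /eqP; apply; ring.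
Qed.



Lemma exists_separating_ray (A B : set (R * R)) : countable A -> countable B ->
  exists c y, [/\ ~ A c, ~ B c, rays_disjoint c A (ray c y) & rays_disjoint c B (ray c y)].
Proof.
move=> cA cB; have cAB := countable_setU cA cB.
have [c1 c1_fresh] := exists_not_in_countable (sub_countable (card_image_le fst _) cAB).
pose c := (c1, 0 : R); pose slope (a : R * R) := (a.2 - c.2) / (a.1 - c.1).
have [y y_fresh] := exists_not_in_countable (sub_countable (card_image_le slope _) cAB).
have off_line a : (A `|` B) a -> a.1 != c.1.
  by move=> ABa; apply/eqP => e; apply: c1_fresh; exists a.
have off_ray a : (A `|` B) a -> c.1 < a.1 -> a.2 - c.2 != y * (a.1 - c.1).
  move=> ABa _; apply/eqP => e; apply: y_fresh; exists a => //.
  by rewrite /slope e mulfK // subr_eq0 off_line.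
exists c, y; split.
- by move=> /(@or_introl _ (B c))/off_line; rewrite eqxx.
- by move=> /(@or_intror (A c))/off_line; rewrite eqxx.
- by apply: rays_disjoint_ray => a Aa; apply: off_ray; left.
- by apply: rays_disjoint_ray => b Bb; apply: off_ray; right.
Qed.

End ray.

Section test_metric.
Variable R : realType.

Lemma sum_inv_pow2 n : \sum_(0 <= j < n) (2 ^- j.+1 : R) = 1 - 2 ^- n.
Proof.
elim: n => [|n IH]; first by rewrite big_geq // expr0 invr1 subrr.
rewrite big_nat_recr //= IH exprS invfM.
by field; rewrite expf_neq0.
Qed.

Lemma sum_inv_pow2_tail N n : (N <= n)%N -> \sum_(N <= j < n) (2 ^- j.+1 : R) <= 2 ^- N.
Proof.
move=> Nn; have := sum_inv_pow2 n; rewrite (big_cat_nat (leq0n N) Nn) /= sum_inv_pow2.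
by have := invr_ge0 (2 ^+ n : R); rewrite exprn_ge0 //; lra.
Qed.

Lemma exists_inv_pow2_lt (e : R) : 0 < e -> exists N, 2 ^- N < e.
Proof.
move=> e0; exists (Num.Def.trunc e^-1).+1.
rewrite invf_plt ?posrE ?exprn_gt0 //; apply: lt_trans (truncnS_gt _) _.
by rewrite -natrX ltr_nat ltn_expl.
Qed.

Variable phi : nat -> R * R -> R.

Lemma dV_le (X Y : set (R * R)) N (eta : R) : 0 <= eta ->
  (forall j, (j < N)%N -> `|set_sum X (phi j) - set_sum Y (phi j)| <= eta) ->
  dV phi X Y <= N%:R * eta + 2 ^- N.
Proof.
move=> eta0 XY; rewrite /dV; set u := (fun j : nat => _).
have frac_ge0 (x : R) : 0 <= x -> 0 <= x / (1 + x) by move=> x0; rewrite divr_ge0 ?addr_ge0.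
have frac_le1 (x : R) : 0 <= x -> x / (1 + x) <= 1.
  by move=> x0; rewrite ler_pdivrMr ?ltr_wpDr //; lra.
have frac_le (x : R) : 0 <= x -> x / (1 + x) <= x.
  by move=> x0; rewrite ler_pdivrMr ?ltr_wpDr //; nra.

have u_ge0 j : 0 <= u j by rewrite mulr_ge0 ?frac_ge0.
have u_le_pow j : u j <= 2 ^- j.+1 by rewrite ler_piMr ?frac_le1.
have u_le_eta j : (j < N)%N -> u j <= eta.
  move=> jN; apply: le_trans (XY j jN); apply: le_trans (frac_le _ (normr_ge0 _)).
  by rewrite ler_piMl ?frac_ge0 // invf_le1 ?exprn_gt0 // exprn_ege1 // ler1n.
have u_nd : nondecreasing_seq (series u).
  by apply/nondecreasing_seqP => n; rewrite /series /= big_nat_recr //= lerDl.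
have u_bounded n : series u n <= N%:R * eta + 2 ^- N.
  apply: le_trans (u_nd _ _ (leq_maxl n N)) _; rewrite /series /=.
  rewrite (big_cat_nat (leq0n N) (leq_maxr n N)) /=; apply: lerD.
    apply: le_trans (_ : \sum_(0 <= j < N) eta <= _).
      by apply: ler_sum_nat => j /andP[_ /u_le_eta].
    by rewrite sumr_const_nat subn0 mulr_natl.
  by apply: le_trans (sum_inv_pow2_tail (leq_maxr n N)); apply: ler_sum_nat.
apply: limr_le; last exact: nearW.
by apply: nondecreasing_is_cvgn => //; exists (N%:R * eta + 2 ^- N) => _ [n _ <-].
Qed.

Lemma dV_continuous_at (gamma : R -> set (R * R)) t :
  (forall j, {for t, continuous (fun s => set_sum (gamma s) (phi j))}) ->
  forall e, 0 < e -> exists2 d, 0 < d & forall s, `|s - t| < d -> dV phi (gamma s) (gamma t) < e.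
Proof.
move=> cont_sums e e0; have [N N_small] := exists_inv_pow2_lt (divr_gt0 e0 (ltr0n _ 2)).
have N1_gt0 : (0 : R) < 2 * N.+1%:R by rewrite mulr_gt0.
pose eta := e / (2 * N.+1%:R); have eta0 : 0 < eta by rewrite divr_gt0.
have : \forall s \near t, forall j : 'I_N,
    `|set_sum (gamma s) (phi j) - set_sum (gamma t) (phi j)| < eta.
  apply: (@filter_forall _ _ _ (nbhs t)) => j.
  by move/cvgr_distC_lt : (cont_sums j); apply.
case/nbhs_ballP => d /= d0 close; exists d => // s st.
have etaE : N%:R * eta + eta = e / 2.
  by rewrite /eta; field; rewrite gt_eqF.
suff : dV phi (gamma s) (gamma t) <= N%:R * eta + 2 ^- N by lra.
apply: dV_le (ltW eta0) _ => j jN; apply: ltW.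
by apply: (close s _ (Ordinal jN)); rewrite /ball /= distrC.
Qed.

End test_metric.

Theorem mainTheorem7 (R : realType) (phi : nat -> R * R -> R) :
  admissible_seq phi -> dV_path_connected phi.
Proof.
move=> [phi_cont _] A B hA hB; have [[cA _ lfA] [cB _ lfB]] := (hA, hB).
have [c [y [Ac Bc sepA sepB]]] := exists_separating_ray cA cB.
have [_ _ lfZ] := Clf_inf_ray c y.
exists (dilation_path c A (ray c y) B); split.
- by move=> t; apply: Clf_inf_dilation_path => //; exact: Clf_inf_ray.
- exact: dilation_path0.
- exact: dilation_path1.
move=> t _ e e0.
have [j|d d0 close] := @dV_continuous_at R phi (dilation_path c A (ray c y) B) t _ e e0.
  have [cont_phi [m supp_phi]] := phi_cont j.
  exact: (continuous_set_sum_dilation_path sepA sepB lfA lfZ lfB Ac (@ray_centre _ c y) Bc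
    cont_phi supp_phi).
by exists d => // s _ /close.
Qed.
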